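(* Let $i\ge 1$ be an integer and $k\ge 10i+35$. Let $H$ be a weighted graph with edge weight $\omega:E(H)\to\{3,4,5\}$ which contains no cycle of odd weight smaller than $2k+1$. Let $B_1,B_2$ be sets of vertices of $H$ with $d(B_1,B_2)\ge 2i+2$, and let $P$ be a path of minimal weight among all paths between $B_1$ and $B_2$. If $N^{3i+1}[B_1]$ and $N^{3i+1}[B_2]$ are weighted bipartite, then $N^i[B_1\cup B_2\cup P]$ is weighted bipartite.
   Context: The weight of a subgraph is the sum of the weights of its edges. $d(B_1,B_2)$ is the unweighted distance, i.e. the minimum number of edges of a path between a vertex of $B_1$ and a vertex of $B_2$. $N^j[S]$ is the set of vertices at unweighted distance at most $j$ from some vertex of $S$ (for a path, of its vertex set). A vertex set $S$ is weighted bipartite if $H[S]$ contains no cycle of odd weight. *)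

From mathcomp Require Import all_boot.
Set Implicit Arguments. Unset Strict Implicit. Unset Printing Implicit Defensive.

Section Defs.
Variable T : finType.
Variable e : rel T.
Variable w : T -> T -> nat.       (* edge weight omega, read on adjacent pairs *)

Definition simple_graph : Prop := symmetric e /\ irreflexive e.

Definition weight_345 : Prop :=
  forall x y, e x y -> w x y = w y x /\ w x y \in [:: 3; 4; 5].

Definition is_path (x : T) (p : seq T) : Prop := path e x p /\ uniq (x :: p).

Definition path_weight (x : T) (p : seq T) : nat :=
  \sum_(pr <- zip (x :: p) p) w pr.1 pr.2.

Definition is_cycle (c : seq T) : Prop := 3 <= size c /\ uniq c /\ cycle e c.

Definition cycle_weight (c : seq T) : nat := \sum_(x <- c) w x (next c x).

(* cycle contained in the induced subgraph H[S] *)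
Definition cycle_in (S : T -> Prop) (c : seq T) : Prop := forall x, x \in c -> S x.

Definition weighted_bipartite (S : T -> Prop) : Prop :=
  forall c, is_cycle c -> cycle_in S c -> ~~ odd (cycle_weight c).

(* N^j[S]: vertices at unweighted distance at most j from some vertex of S *)
Definition nbhd (j : nat) (S : T -> Prop) (v : T) : Prop :=
  exists s, S s /\ exists p, path e s p /\ last s p = v /\ size p <= j.

Definition dist_ge (B1 B2 : {set T}) (m : nat) : Prop :=
  forall x p, x \in B1 -> is_path x p -> last x p \in B2 -> m <= size p.

Definition min_weight_path (B1 B2 : {set T}) (x : T) (p : seq T) : Prop :=
  [/\ x \in B1, is_path x p, last x p \in B2 &
      forall y q, y \in B1 -> is_path y q -> last y q \in B2 ->
        path_weight x p <= path_weight y q].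

End Defs.

(* A set of vertices is weighted bipartite exactly when it carries a parity potential
   phi, i.e. every walk inside it has weight of the parity of phi at its two ends.
   Such potentials exist on N^{3i+1}[B1] and N^{3i+1}[B2], and along P the parity of the
   prefix weight is one. Glued together they predict the parity of every walk with at
   most 2i+1 edges between two vertices of S = B1 u B2 u P. No such walk joins B1 to B2.
   A short walk between two vertices of P is at least as heavy as the subpath of P it
   bypasses, by minimality of P, so the two form a closed walk of weight at most 2k,
   which is even because an odd closed walk contains an odd cycle of no larger weight.
   A short walk from a vertex of P to B1 is at least as heavy as the part of P before
   that vertex, so this part has at most 4i+1 edges and the detour through it stays in
   N^{3i+1}[B1]; symmetrically for B2. Finally, a potential for short walks on S
   extends to N^i[S]: give each vertex the potential of an anchor in S at distance at
   most i plus the parity of the connecting walk; an edge then closes a walk of length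
   at most 2i+1 between two anchors. *)

From mathcomp Require Import all_boot zify.
From Stdlib Require Import ClassicalEpsilon.

Set Implicit Arguments.
Unset Strict Implicit.
Unset Printing Implicit Defensive.

Lemma last_take_index (T : eqType) (x v : T) (s : seq T) :
  v \in x :: s -> last x (take (index v (x :: s)) s) = v.
Proof.
move=> vs; have le_vs : index v (x :: s) <= size s by rewrite -ltnS index_mem.
rewrite (last_nth x) size_takel // -[x :: _]/(take (index v (x :: s)).+1 (x :: s)).
by rewrite nth_take // nth_index.
Qed.

Lemma cat_common_prefix (T : Type) (A1 A2 C1 C2 : seq T) :
  A1 ++ A2 = C1 ++ C2 -> size A1 <= size C1 -> exists2 M, C1 = A1 ++ M & A2 = M ++ C2.
Proof.
elim: A1 C1 => [|a A1 IH] C1 /=; first by move=> ->; exists C1.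
case: C1 => [|c C1] //= [-> /IH E] /E [M -> ->].
by exists M.
Qed.

Lemma not_uniq_closed_subwalk (T : eqType) (x : T) (p : seq T) : ~~ uniq (x :: p) ->
  exists p1 p2 p3, [/\ p = p1 ++ p2 ++ p3, 0 < size p2 & last (last x p1) p2 = last x p1].
Proof.
elim: p x => [|y p IH] x //=.
rewrite negb_and negbK => /orP[/splitPr[q1 q2] | /IH[p1 [p2 [p3 [-> p2_pos closed]]]]].
  by exists [::], (rcons q1 x), q2; rewrite cat_rcons last_rcons size_rcons.
by exists (y :: p1), p2, p3.
Qed.

Lemma root_walks (T : finType) (E : rel T) : connect_sym E ->
  exists rw : T -> seq T, forall v, path E (root E v) (rw v) /\ last (root E v) (rw v) = v.
Proof.
move=> E_sym.
apply: (choice (fun v s => path E (root E v) s /\ last (root E v) s = v)) => v.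
have /connectP[s s_path s_last] : connect E (root E v) v by rewrite E_sym connect_root.
by exists s.
Qed.

Section PathWeight.
Variables (T : finType) (w : T -> T -> nat).
Local Notation pw := (path_weight w).

Lemma path_weight_nil x : pw x [::] = 0.
Proof. by rewrite /path_weight big_nil. Qed.

Lemma path_weight_cons x y p : pw x (y :: p) = w x y + pw y p.
Proof. by rewrite /path_weight big_cons. Qed.

Lemma path_weight_cat x p q : pw x (p ++ q) = pw x p + pw (last x p) q.
Proof.
elim: p x => [|y p IH] x /=; first by rewrite path_weight_nil.
by rewrite !path_weight_cons IH addnA.
Qed.

Lemma path_weight_rcons x p y : pw x (rcons p y) = pw x p + w (last x p) y.
Proof. by rewrite -cats1 path_weight_cat path_weight_cons path_weight_nil addn0. Qed.

Lemma fpath_weight (f : T -> T) x p :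
  fpath f x p -> pw x p = \sum_(y <- belast x p) w y (f y).
Proof.
elim: p x => [|y p IH] x /=; first by rewrite path_weight_nil big_nil.
by case/andP=> /eqP <- /IH; rewrite path_weight_cons big_cons => ->.
Qed.

Lemma cycle_weight_closed_walk x s :
  uniq (x :: s) -> cycle_weight w (x :: s) = pw x (rcons s x).
Proof.
move=> xs_uniq; have := cycle_next xs_uniq; rewrite /= => /fpath_weight ->.
by rewrite belast_rcons.
Qed.

End PathWeight.

Section Walks.
Variables (T : finType) (e : rel T).

Lemma path_weight_bounds (w : T -> T -> nat) lo hi x p :
  (forall a b, e a b -> lo <= w a b <= hi) ->
  path e x p -> lo * size p <= path_weight w x p <= hi * size p.
Proof.
move=> w_bounds; elim: p x => [|y p IH] x /=; first by rewrite path_weight_nil !muln0.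
case/andP=> /w_bounds exy /IH; rewrite path_weight_cons !mulnS; lia.
Qed.

Lemma shorten_walk x p : path e x p ->
  exists2 q, is_path e x q & [/\ last x q = last x p, size q <= size p
    & forall w, path_weight w x q <= path_weight w x p].
Proof.
move: {2}(size p) (leqnn (size p)) => n; elim: n p => [|n IH] p.
  by rewrite leqn0 => /nilP -> _; exists [::].
case: (boolP (uniq (x :: p))) => [p_uniq _ xp | ]; first by exists p.
case/not_uniq_closed_subwalk=> [p1 [p2 [p3 [-> p2_pos closed]]]] sz xp.
(* Restated at type [seq T], so that [lia] sees the same atom [size p2] as in [sz] *)
have {}p2_pos : 0 < size (p2 : seq T) := p2_pos.
have xp' : path e x (p1 ++ p3) by move: xp; rewrite !cat_path closed => /and3P[-> _ ->].
have [|q q_path [q_last q_size q_w]] := IH _ _ xp'.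
  by move: sz; rewrite !size_cat; lia.
exists q => //; split.
- by rewrite q_last !last_cat closed.
- by move: q_size; rewrite !size_cat; lia.
- move=> w; apply: leq_trans (q_w w) _.
  by rewrite !path_weight_cat closed leq_add2l leq_addl.
Qed.

Lemma min_weight_path_walk w B1 B2 x p y q : min_weight_path e w B1 B2 x p ->
  y \in B1 -> path e y q -> last y q \in B2 -> path_weight w x p <= path_weight w y q.
Proof.
case=> _ _ _ min_p y1 /shorten_walk[q' q'_path [q'_last _ q'_w]] y2.
by apply: leq_trans (q'_w w); apply: min_p; rewrite ?q'_last.
Qed.

Lemma dist_ge_walk B1 B2 m y q : dist_ge e B1 B2 m ->
  y \in B1 -> path e y q -> last y q \in B2 -> m <= size q.
Proof.
move=> dist_m y1 /shorten_walk[q' q'_path [q'_last q'_size _]] y2.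
by apply: leq_trans q'_size; apply: (dist_m y); rewrite ?q'_last.
Qed.

End Walks.

Section UndirectedWalks.
Variables (T : finType) (e : rel T) (w : T -> T -> nat).
Local Notation pw := (path_weight w).
Hypothesis e_sym : symmetric e.
Hypothesis w_sym : forall a b, e a b -> w a b = w b a.

Definition rev_walk (x : T) (p : seq T) : seq T := rev (belast x p).

Lemma rev_walk_cons x p : last x p :: rev_walk x p = rev (x :: p).
Proof. by rewrite /rev_walk -rev_rcons -lastI. Qed.

Lemma last_rev_walk x p : last (last x p) (rev_walk x p) = x.
Proof. by rewrite -(last_cons x) rev_walk_cons rev_cons last_rcons. Qed.

Lemma size_rev_walk x p : size (rev_walk x p) = size p.
Proof. by rewrite size_rev size_belast. Qed.

Lemma mem_rev_walk x p : last x p :: rev_walk x p =i x :: p.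
Proof. by move=> v; rewrite rev_walk_cons mem_rev. Qed.

Lemma rev_walk_path x p : path e x p -> path e (last x p) (rev_walk x p).
Proof. by rewrite /rev_walk rev_path; apply: sub_path => a b /=; rewrite e_sym. Qed.

Lemma path_weight_rev_walk x p : path e x p -> pw (last x p) (rev_walk x p) = pw x p.
Proof.
elim: p x => [|y p IH] x //= /andP[exy /IH yp_w].
rewrite /rev_walk /= rev_cons path_weight_rcons -/(rev_walk y p) yp_w last_rev_walk.
by rewrite path_weight_cons (w_sym exy) addnC.
Qed.

Lemma closed_walk_cat_rev a q1 q2 :
  path e a q1 -> path e a q2 -> last a q1 = last a q2 ->
  [/\ path e a (q1 ++ rev_walk a q2), last a (q1 ++ rev_walk a q2) = a
    & pw a (q1 ++ rev_walk a q2) = pw a q1 + pw a q2].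
Proof.
move=> aq1 aq2 same_end.
by rewrite cat_path last_cat path_weight_cat same_end aq1 rev_walk_path
  ?last_rev_walk ?path_weight_rev_walk.
Qed.

Hypothesis e_irr : irreflexive e.

Lemma odd_closed_walk_cycle x p : path e x p -> last x p = x -> odd (pw x p) ->
  exists c, [/\ is_cycle e c, {subset c <= x :: p}, odd (cycle_weight w c)
              & cycle_weight w c <= pw x p].
Proof.
move: {2}(size p) (leqnn (size p)) => n; elim: n x p => [|n IH] x p.
  by rewrite leqn0 => /nilP ->; rewrite path_weight_nil.
case/lastP: p => [|s z]; first by rewrite path_weight_nil.
rewrite last_rcons size_rcons => sz xp z_x; subst z.
have [xs_uniq | ] := boolP (uniq (x :: s)).
  have sub : {subset x :: s <= x :: rcons s x}.
    by move=> v vs; rewrite in_cons mem_rcons vs orbT.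
  case: s xs_uniq xp sub {sz} => [|y [|y' s]] xs_uniq xp sub odd_w.
  - by move: xp; rewrite /= e_irr.
  - move: xp odd_w => /= /andP[exy _].
    by rewrite !path_weight_cons path_weight_nil (w_sym exy) addn0 addnn odd_double.
  - exists [:: x, y, y' & s]; rewrite (cycle_weight_closed_walk _ xs_uniq).
    by split.
case/not_uniq_closed_subwalk=> [p1 [p2 [p3 [s_split p2_pos closed]]]]; subst s.
have {}p2_pos : 0 < size (p2 : seq T) := p2_pos.
rewrite !rcons_cat in xp *.
have [x_p1 z_p2] : path e x (p1 ++ rcons p3 x) /\ path e (last x p1) p2.
  by move: xp; rewrite !cat_path closed => /and3P[-> -> ->].
rewrite !path_weight_cat closed !oddD => odd_w.
have [odd_p2 | even_p2] := boolP (odd (pw (last x p1) p2)).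
  have [|c [c_cycle c_sub c_odd c_w]] := IH _ _ _ z_p2 closed odd_p2.
    by move: sz; rewrite !size_cat; lia.
  exists c; split=> // [v /c_sub | ]; last by lia.
  rewrite in_cons => /orP[/eqP -> | v_p2]; last by rewrite in_cons !mem_cat v_p2 !orbT.
  by have := mem_last x p1; rewrite !in_cons !mem_cat => /orP[-> | ->]; rewrite ?orbT.
have [|||c [c_cycle c_sub c_odd c_w]] := IH x (p1 ++ rcons p3 x) _ x_p1.
- by move: sz; rewrite !size_cat size_rcons; lia.
- by rewrite last_cat last_rcons.
- by move: odd_w; rewrite path_weight_cat oddD (negbTE even_p2) addFb.
exists c; split=> // [v /c_sub | ].
  by rewrite !in_cons !mem_cat => /or3P[-> | -> | ->]; rewrite ?orbT.
by apply: leq_trans c_w _; rewrite path_weight_cat leq_add2l leq_addl.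
Qed.

Lemma closed_walk_even_in (Q : T -> Prop) x p : weighted_bipartite e w Q ->
  path e x p -> last x p = x -> {in x :: p, forall v, Q v} -> ~~ odd (pw x p).
Proof.
move=> bip xp closed xpQ; apply/negP.
case/(odd_closed_walk_cycle xp closed)=> c [c_cycle c_sub c_odd _].
by move: (bip c c_cycle (fun v vc => xpQ v (c_sub v vc))); rewrite c_odd.
Qed.

Lemma short_closed_walk_even k x p :
  (forall c, is_cycle e c -> odd (cycle_weight w c) -> 2 * k + 1 <= cycle_weight w c) ->
  path e x p -> last x p = x -> pw x p <= 2 * k -> ~~ odd (pw x p).
Proof.
move=> odd_girth xp closed short; apply/negP.
case/(odd_closed_walk_cycle xp closed)=> c [c_cycle _ c_odd c_w].
by have := odd_girth c c_cycle c_odd; lia.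
Qed.

Lemma walk_parity_in (Q : T -> Prop) a q1 q2 : weighted_bipartite e w Q ->
  path e a q1 -> path e a q2 -> last a q1 = last a q2 ->
  {in a :: q1, forall v, Q v} -> {in a :: q2, forall v, Q v} ->
  odd (pw a q1) = odd (pw a q2).
Proof.
move=> bip aq1 aq2 same_end q1Q q2Q.
have [cl_path cl_last cl_w] := closed_walk_cat_rev aq1 aq2 same_end.
apply/eqP; rewrite -negb_add -oddD -cl_w.
apply: (closed_walk_even_in bip cl_path cl_last) => v.
rewrite in_cons mem_cat orbA => /orP[/q1Q // | v_q2].
by apply: q2Q; rewrite -mem_rev_walk in_cons v_q2 orbT.
Qed.

Lemma short_walk_parity k a q1 q2 :
  (forall c, is_cycle e c -> odd (cycle_weight w c) -> 2 * k + 1 <= cycle_weight w c) ->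
  path e a q1 -> path e a q2 -> last a q1 = last a q2 -> pw a q1 + pw a q2 <= 2 * k ->
  odd (pw a q1) = odd (pw a q2).
Proof.
move=> odd_girth aq1 aq2 same_end short.
have [cl_path cl_last cl_w] := closed_walk_cat_rev aq1 aq2 same_end.
apply/eqP; rewrite -negb_add -oddD -cl_w.
by apply: (short_closed_walk_even odd_girth cl_path cl_last); rewrite cl_w.
Qed.

Definition parity_potential (Q : T -> Prop) (phi : T -> bool) : Prop :=
  forall a q, path e a q -> {in a :: q, forall v, Q v} ->
    odd (pw a q) = phi a (+) phi (last a q).

Lemma edge_parity_potential (Q : T -> Prop) (phi : T -> bool) :
  (forall u v, Q u -> Q v -> e u v -> odd (w u v) = phi u (+) phi v) ->
  parity_potential Q phi.
Proof.
move=> edge_parity a q; elim: q a => [|b q IH] a /=; first by rewrite path_weight_nil addbb.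
case/andP=> eab bq abqQ; have bqQ : {in b :: q, forall v, Q v}.
  by move=> v vq; apply: abqQ; rewrite in_cons vq orbT.
rewrite path_weight_cons oddD IH // edge_parity ?addbA ?addbK //; apply: abqQ.
  exact: mem_head.
by rewrite !inE eqxx orbT.
Qed.

Lemma potential_weighted_bipartite Q phi :
  parity_potential Q phi -> weighted_bipartite e w Q.
Proof.
move=> pot [|x s] [size_c [xs_uniq xs_cycle]] xsQ //.
rewrite cycle_weight_closed_walk // (pot _ _ xs_cycle) ?last_rcons ?addbb // => v.
by rewrite in_cons mem_rcons => /orP[/eqP -> | ]; apply: xsQ; rewrite ?mem_head.
Qed.

Lemma weighted_bipartite_potential Q :
  weighted_bipartite e w Q -> exists phi, parity_potential Q phi.
Proof.
move=> bip.
have [q qQ] : exists q : T -> bool, forall v, q v <-> Q v.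
  apply: (choice (fun v (b : bool) => b <-> Q v)) => v.
  by case: (excluded_middle_informative (Q v)); [exists true | exists false].
pose eQ := [rel u v | [&& q u, q v & e u v]].
have eQ_sym : connect_sym eQ.
  by apply: sym_connect_sym => u v; rewrite /= e_sym andbCA.
have eQ_walk r s : path eQ r s -> Q (last r s) -> path e r s /\ {in r :: s, forall v, Q v}.
  elim: s r => [|y s IH] r /=; first by move=> _ Qr; split=> // v /[!inE] /eqP ->.
  case/andP=> /and3P[/qQ Qr _ ery] /IH{}IH /IH[ys ysQ]; rewrite ery ys.
  by split=> // v /[!in_cons] /orP[/eqP -> // | /ysQ].
have [rw rwP] := root_walks eQ_sym.
(* The parity of a fixed walk inside Q from the root of the component of v *)
exists (fun v => odd (pw (root eQ v) (rw v))) => a p ap apQ.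
have ap_eQ : path eQ a p.
  apply: (sub_in_path (P := q)) ap => [u v qu qv /= euv | ]; first by apply/and3P.
  by apply/allP=> v /apQ /qQ.
have same_root : root eQ a = root eQ (last a p).
  by apply/(rootP eQ_sym)/connectP; exists p.
have [ra_path ra_last] := rwP a; have [rb_path rb_last] := rwP (last a p).
rewrite -{}same_root in rb_path rb_last *.
set r := root eQ a in ra_path ra_last rb_path rb_last *.
have [ra_e raQ] : path e r (rw a) /\ {in r :: rw a, forall v, Q v}.
  by apply: eQ_walk; rewrite // ra_last; apply: apQ; exact: mem_head.
have [rb_e rbQ] : path e r (rw (last a p)) /\ {in r :: rw (last a p), forall v, Q v}.
  by apply: eQ_walk; rewrite // rb_last; apply: apQ; exact: mem_last.
have rap_e : path e r (rw a ++ p) by rewrite cat_path ra_e ra_last.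
have same_end : last r (rw a ++ p) = last r (rw (last a p)).
  by rewrite last_cat ra_last rb_last.
have rapQ : {in r :: rw a ++ p, forall v, Q v}.
  move=> v; rewrite in_cons mem_cat orbA => /orP[/raQ // | v_p].
  by apply: apQ; rewrite in_cons v_p orbT.
have := walk_parity_in bip rap_e rb_e same_end rapQ rbQ.
by rewrite path_weight_cat ra_last oddD => <-; rewrite addKb.
Qed.

Lemma nbhd_walk_in (S : T -> Prop) m a W : path e a W -> S a -> S (last a W) ->
  size W <= 2 * m + 1 -> {in a :: W, forall v, nbhd e m S v}.
Proof.
move=> aW Sa Sb W_size v vW.
have v_def : last a (take (index v (a :: W)) W) = v := last_take_index vW.
move: (take _ W) (drop (index v (a :: W)) W) (cat_take_drop (index v (a :: W)) W) v_def.
move=> W1 W2 W_split v_def; subst v W.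
move: aW W_size Sb; rewrite cat_path last_cat size_cat => /andP[aW1 vW2] W_size Sb.
case: (leqP (size W1) m) => W1_size; first by exists a; split=> //; exists W1.
exists (last (last a W1) W2); split=> //; exists (rev_walk (last a W1) W2).
by rewrite rev_walk_path // last_rev_walk size_rev_walk; split=> //; split=> //; lia.
Qed.

Definition short_walk_potential (S : T -> Prop) (m : nat) (phi : T -> bool) : Prop :=
  forall a X, path e a X -> size X <= m -> S a -> S (last a X) ->
    odd (pw a X) = phi a (+) phi (last a X).

Lemma nbhd_potential (S : T -> Prop) j phi :
  short_walk_potential S (2 * j + 1) phi -> exists psi, parity_potential (nbhd e j S) psi.
Proof.
move=> short_pot.
pose anchored v (sp : T * seq T) :=
  [/\ S sp.1, path e sp.1 sp.2, last sp.1 sp.2 = v & size sp.2 <= j].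
have [anchor anchorP] : exists anchor, forall v, nbhd e j S v -> anchored v (anchor v).
  apply: (choice (fun v sp => nbhd e j S v -> anchored v sp)) => v.
  case: (excluded_middle_informative (nbhd e j S v)) => [[s [Ss [p sp]]] | not_nbhd].
    by exists (s, p) => _; case: sp => sp [sp_last sp_size]; split.
  by exists (v, [::]).
exists (fun v => phi (anchor v).1 (+) odd (pw (anchor v).1 (anchor v).2)).
apply: edge_parity_potential => u v /anchorP + /anchorP.
case: (anchor u) => [su pu] [/= Su su_path su_last su_size]; subst u.
case: (anchor v) => [sv pv] [/= Sv sv_path sv_last sv_size]; subst v => euv.
pose W := rcons pu (last sv pv) ++ rev_walk sv pv.
have W_path : path e su W.
  by rewrite cat_path rcons_path su_path euv last_rcons rev_walk_path.
have W_last : last su W = sv by rewrite last_cat last_rcons last_rev_walk.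
have W_size : size W <= 2 * j + 1 by rewrite size_cat size_rcons size_rev_walk; lia.
have := short_pot su W W_path W_size Su; rewrite W_last => /(_ Sv).
rewrite path_weight_cat path_weight_rcons last_rcons path_weight_rev_walk // !oddD.
by case: (phi su) (phi sv) (odd (pw su pu)) (odd (pw sv pv)) (odd (w _ _))
  => [] [] [] [] [].
Qed.

Lemma potential_short_walk (S : T -> Prop) m phi :
  parity_potential (nbhd e m S) phi -> short_walk_potential S (2 * m + 1) phi.
Proof. by move=> pot a X aX X_size Sa Sb; apply: (pot a X aX); apply: nbhd_walk_in. Qed.

End UndirectedWalks.

Section MinWeightPath.
Variables (T : finType) (e : rel T) (w : T -> T -> nat).
Local Notation pw := (path_weight w).
Hypothesis e_sym : symmetric e.
Hypothesis e_irr : irreflexive e.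
Hypothesis w_sym : forall a b, e a b -> w a b = w b a.
Hypothesis w_bounds : forall a b, e a b -> 3 <= w a b <= 5.
Variables (i k : nat) (B1 B2 : {set T}) (x : T) (p : seq T).
Hypothesis k_large : 10 * i + 5 <= k.
Hypothesis odd_girth :
  forall c, is_cycle e c -> odd (cycle_weight w c) -> 2 * k + 1 <= cycle_weight w c.
Hypothesis B_far : dist_ge e B1 B2 (2 * i + 2).
Hypothesis P_min : min_weight_path e w B1 B2 x p.
Variables phi1 phi2 : T -> bool.
Hypothesis phi1P : parity_potential e w (nbhd e (3 * i + 1) (fun v => v \in B1)) phi1.
Hypothesis phi2P : parity_potential e w (nbhd e (3 * i + 1) (fun v => v \in B2)) phi2.

Let x_B1 : x \in B1. Proof. by case: P_min. Qed.
Let P_path : path e x p. Proof. by case: P_min => _ []. Qed.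
Let y_B2 : last x p \in B2. Proof. by case: P_min. Qed.

Definition prefix_to v := take (index v (x :: p)) p.
Definition suffix_from v := drop (index v (x :: p)) p.

Lemma cat_prefix_suffix v : p = prefix_to v ++ suffix_from v.
Proof. by rewrite cat_take_drop. Qed.

Lemma last_prefix_to v : v \in x :: p -> last x (prefix_to v) = v.
Proof. exact: last_take_index. Qed.

Lemma prefix_suffix_path v :
  v \in x :: p -> path e x (prefix_to v) /\ path e v (suffix_from v).
Proof.
move=> vP; move: P_path.
by rewrite {1}(cat_prefix_suffix v) cat_path last_prefix_to // => /andP.
Qed.

Lemma last_suffix_from v : v \in x :: p -> last v (suffix_from v) = last x p.
Proof. by move=> vP; rewrite [in RHS](cat_prefix_suffix v) last_cat last_prefix_to. Qed.

Lemma short_walk_weight a X : path e a X -> size X <= 2 * i + 1 -> pw a X <= 10 * i + 5.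
Proof. by move=> aX X_size; have := path_weight_bounds w_bounds aX; lia. Qed.

Lemma light_walk_size a Q : path e a Q -> pw a Q <= 10 * i + 5 -> size Q <= 4 * i + 1.
Proof. by move=> aQ Q_light; have := path_weight_bounds w_bounds aQ; lia. Qed.

Lemma on_path_parity_ordered a X : path e a X -> size X <= 2 * i + 1 ->
  a \in x :: p -> last a X \in x :: p ->
  size (prefix_to a) <= size (prefix_to (last a X)) ->
  odd (pw a X) = odd (pw x (prefix_to a)) (+) odd (pw x (prefix_to (last a X))).
Proof.
move=> aX X_size aP bP ordered; set b := last a X in bP ordered *.
have [M pre_b suf_a] :=
  cat_common_prefix (etrans (esym (cat_prefix_suffix a)) (cat_prefix_suffix b)) ordered.
have [a_pre a_suf] := prefix_suffix_path aP; have [b_pre b_suf] := prefix_suffix_path bP.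
have M_last : last a M = b by rewrite -(last_prefix_to aP) -last_cat -pre_b last_prefix_to.
have aM : path e a M by move: a_suf; rewrite suf_a cat_path => /andP[].
have M_light : pw a M <= pw a X.
  have detour_path : path e x (prefix_to a ++ X ++ suffix_from b).
    by rewrite !cat_path a_pre (last_prefix_to aP) aX b_suf.
  have detour_last : last x (prefix_to a ++ X ++ suffix_from b) = last x p.
    by rewrite !last_cat (last_prefix_to aP) -/b -(last_suffix_from bP).
  have := min_weight_path_walk P_min x_B1 detour_path; rewrite detour_last => /(_ y_B2).
  rewrite {1}(cat_prefix_suffix a) suf_a !path_weight_cat (last_prefix_to aP) M_last.
  by rewrite leq_add2l leq_add2r.
have X_le_k : pw a X <= k := leq_trans (short_walk_weight aX X_size) k_large.
have XM_short : pw a X + pw a M <= 2 * k.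
  by rewrite mul2n -addnn leq_add // (leq_trans M_light).
have parity_XM : odd (pw a X) = odd (pw a M).
  by apply: (short_walk_parity e_sym w_sym e_irr odd_girth aX aM); rewrite ?M_last.
by rewrite parity_XM pre_b path_weight_cat (last_prefix_to aP) oddD addKb.
Qed.

Lemma on_path_parity a X : path e a X -> size X <= 2 * i + 1 ->
  a \in x :: p -> last a X \in x :: p ->
  odd (pw a X) = odd (pw x (prefix_to a)) (+) odd (pw x (prefix_to (last a X))).
Proof.
move=> aX X_size aP bP.
have [ordered | /ltnW reversed] := leqP (size (prefix_to a)) (size (prefix_to (last a X))).
  exact: on_path_parity_ordered.
have := on_path_parity_ordered (rev_walk_path e_sym aX).
rewrite size_rev_walk last_rev_walk (path_weight_rev_walk w_sym) //.
by move=> /(_ X_size bP aP reversed); rewrite addbC.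
Qed.

Lemma path_B1_parity a X : path e a X -> size X <= 2 * i + 1 ->
  a \in x :: p -> last a X \in B1 ->
  odd (pw a X) = odd (pw x (prefix_to a)) (+) (phi1 x (+) phi1 (last a X)).
Proof.
move=> aX X_size aP bB1.
have [a_pre a_suf] := prefix_suffix_path aP.
have pre_light : pw x (prefix_to a) <= pw a X.
  have detour_path : path e (last a X) (rev_walk a X ++ suffix_from a).
    by rewrite cat_path (rev_walk_path e_sym) // last_rev_walk.
  have := min_weight_path_walk P_min bB1 detour_path.
  rewrite last_cat last_rev_walk last_suffix_from // => /(_ y_B2).
  rewrite {1}(cat_prefix_suffix a) !path_weight_cat last_rev_walk (last_prefix_to aP).
  by rewrite (path_weight_rev_walk w_sym) // leq_add2r.
have pre_short : size (prefix_to a) <= 4 * i + 1.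
  exact: light_walk_size a_pre (leq_trans pre_light (short_walk_weight aX X_size)).
have W_path : path e x (prefix_to a ++ X) by rewrite cat_path a_pre (last_prefix_to aP).
have W_size : size (prefix_to a ++ X) <= 2 * (3 * i + 1) + 1 by rewrite size_cat; lia.
have := potential_short_walk e_sym phi1P W_path W_size x_B1.
rewrite last_cat (last_prefix_to aP) path_weight_cat (last_prefix_to aP) oddD.
by move=> /(_ bB1) <-; rewrite addKb.
Qed.

Lemma path_B2_parity a X : path e a X -> size X <= 2 * i + 1 ->
  a \in x :: p -> last a X \in B2 ->
  odd (pw a X) = odd (pw a (suffix_from a)) (+) (phi2 (last x p) (+) phi2 (last a X)).
Proof.
move=> aX X_size aP bB2.
have [a_pre a_suf] := prefix_suffix_path aP.
have suf_light : pw a (suffix_from a) <= pw a X.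
  have detour_path : path e x (prefix_to a ++ X).
    by rewrite cat_path a_pre (last_prefix_to aP).
  have := min_weight_path_walk P_min x_B1 detour_path.
  rewrite last_cat (last_prefix_to aP) => /(_ bB2).
  by rewrite {1}(cat_prefix_suffix a) !path_weight_cat (last_prefix_to aP) leq_add2l.
have suf_short : size (suffix_from a) <= 4 * i + 1.
  exact: light_walk_size a_suf (leq_trans suf_light (short_walk_weight aX X_size)).
have W_path : path e (last x p) (rev_walk a (suffix_from a) ++ X).
  by rewrite -(last_suffix_from aP) cat_path (rev_walk_path e_sym) // last_rev_walk.
have W_size : size (rev_walk a (suffix_from a) ++ X) <= 2 * (3 * i + 1) + 1.
  by rewrite size_cat size_rev_walk; lia.
have := potential_short_walk e_sym phi2P W_path W_size y_B2.
rewrite last_cat -(last_suffix_from aP) path_weight_cat last_rev_walk.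
by rewrite (path_weight_rev_walk w_sym) // oddD => /(_ bB2) <-; rewrite addKb.
Qed.

Lemma no_short_walk_B1_B2 a X :
  path e a X -> size X <= 2 * i + 1 -> a \in B1 -> last a X \in B2 -> False.
Proof.
move=> aX X_size aB1 bB2; have := leq_trans (dist_ge_walk B_far aB1 aX bB2) X_size.
by rewrite addn2 addn1 ltnn.
Qed.

(* The potentials of the two neighbourhoods are shifted to agree with the prefix parity
   at the two ends of P. *)
Definition glued_potential v : bool :=
  if v \in x :: p then odd (pw x (prefix_to v))
  else if v \in B1 then phi1 v (+) phi1 x
  else phi2 v (+) phi2 (last x p) (+) odd (pw x p).

Let in_S v := [\/ v \in B1, v \in B2 | v \in x :: p].

Lemma from_path_parity a X : path e a X -> size X <= 2 * i + 1 ->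
  a \in x :: p -> in_S (last a X) ->
  odd (pw a X) = glued_potential a (+) glued_potential (last a X).
Proof.
move=> aX X_size aP bS; rewrite /glued_potential aP.
have [bP | bNP] := ifPn; first exact: on_path_parity.
have [bB1 | bNB1] := ifPn.
  by rewrite path_B1_parity // [phi1 x (+) _]addbC.
have bB2 : last a X \in B2 by case: bS bNP bNB1 => ->.
have P_split : odd (pw x p) = odd (pw x (prefix_to a)) (+) odd (pw a (suffix_from a)).
  by rewrite {1}(cat_prefix_suffix a) path_weight_cat (last_prefix_to aP) oddD.
rewrite path_B2_parity // P_split.
by case: (odd (pw x (prefix_to a))) (odd (pw a (suffix_from a))) (phi2 (last x p))
  (phi2 (last a X)) => [] [] [] [].
Qed.

Lemma glued_short_walk_potential :
  short_walk_potential e w in_S (2 * i + 1) glued_potential.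
Proof.
move=> a X aX X_size aS bS.
have [aP | aNP] := boolP (a \in x :: p); first exact: from_path_parity.
have [bP | bNP] := boolP (last a X \in x :: p).
  have := from_path_parity (rev_walk_path e_sym aX).
  rewrite size_rev_walk last_rev_walk (path_weight_rev_walk w_sym) // => /(_ X_size bP aS).
  by rewrite addbC.
have X_short : size X <= 2 * (3 * i + 1) + 1 by lia.
have aB : (a \in B1) || (a \in B2) by case: aS aNP => ->; rewrite ?orbT.
have bB : (last a X \in B1) || (last a X \in B2) by case: bS bNP => ->; rewrite ?orbT.
rewrite /glued_potential (negbTE aNP) (negbTE bNP).
have [aB1 | aNB1] := ifPn; have [bB1 | bNB1] := ifPn.
- rewrite (potential_short_walk e_sym phi1P aX X_short aB1 bB1).
  by case: (phi1 a) (phi1 (last a X)) (phi1 x) => [] [] [].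
- by rewrite (negbTE bNB1) in bB; case: (no_short_walk_B1_B2 aX X_size aB1 bB).
- rewrite (negbTE aNB1) in aB.
  have := no_short_walk_B1_B2 (rev_walk_path e_sym aX).
  by rewrite size_rev_walk last_rev_walk => /(_ X_size bB1 aB).
rewrite (negbTE aNB1) in aB; rewrite (negbTE bNB1) in bB.
rewrite (potential_short_walk e_sym phi2P aX X_short aB bB).
by case: (phi2 a) (phi2 (last a X)) (phi2 (last x p)) (odd _) => [] [] [] [].
Qed.

End MinWeightPath.

Theorem corollary4p4 (T : finType) (e : rel T) (w : T -> T -> nat)
    (i k : nat) (B1 B2 : {set T}) (x : T) (p : seq T) :
  1 <= i -> 10 * i + 35 <= k ->
  simple_graph e -> weight_345 e w ->
  (forall c, is_cycle e c -> odd (cycle_weight w c) -> 2 * k + 1 <= cycle_weight w c) ->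
  dist_ge e B1 B2 (2 * i + 2) ->
  min_weight_path e w B1 B2 x p ->
  weighted_bipartite e w (nbhd e (3 * i + 1) (fun v => v \in B1)) ->
  weighted_bipartite e w (nbhd e (3 * i + 1) (fun v => v \in B2)) ->
  weighted_bipartite e w
    (nbhd e i (fun v => [\/ v \in B1, v \in B2 | v \in x :: p])).
Proof.
move=> _ k_large [e_sym e_irr] w_345 odd_girth B_far P_min bip1 bip2.
have {}k_large : 10 * i + 5 <= k by lia.
have w_sym a b : e a b -> w a b = w b a by case/w_345.
have w_bounds a b : e a b -> 3 <= w a b <= 5.
  by case/w_345=> _; rewrite !inE => /or3P[] /eqP ->.
have [phi1 phi1P] := weighted_bipartite_potential e_sym w_sym e_irr bip1.
have [phi2 phi2P] := weighted_bipartite_potential e_sym w_sym e_irr bip2.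
have glued := glued_short_walk_potential e_sym e_irr w_sym w_bounds k_large odd_girth
  B_far P_min phi1P phi2P.
have [psi psiP] := nbhd_potential e_sym w_sym glued.
exact: potential_weighted_bipartite psiP.
Qed.
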